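(* For $k\in\mathcal N$, let $\pi^k$ be the stationary distribution of the single-server queue under the threshold policy with threshold $k$ (active at states $0,\dots,k$, passive at states $\ge k+1$). Then $\sum_{j=0}^k \pi^k(j)$ is an increasing function of $k$.
   Context: Single-server queue: Bernoulli($p$) arrivals, $X_{t+1}=X_t-D_{t+1}+\nu_t\xi_{t+1}$ on $\mathcal N=\{0,1,\dots\}$, $\nu_t\in\{0,1\}$ with arrivals admitted only when $\nu_t=1$; given $X_t=x\ge1$, $D_{t+1}\sim\mathrm{Binomial}(x,q/x)$, no departures at $x=0$; $1>q>2p>0$. Under the threshold-$k$ policy the recurrent class is $\{0,1,\dots,k+1\}$. *)

From Stdlib Require Import Reals Lra Lia Arith.
Open Scope R_scope.

Definition binom_pmf (n : nat) (r : R) (d : nat) : R :=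
  if (d <=? n)%nat then C n d * r ^ d * (1 - r) ^ (n - d) else 0.

(* Law of the number of departures D_{t+1} given X_t = x:
   Binomial(x, q/x) for x >= 1, and D = 0 almost surely at x = 0. *)
Definition dep_pmf (q : R) (x d : nat) : R :=
  match x with
  | O => if (d =? 0)%nat then 1 else 0
  | S _ => binom_pmf x (q / INR x) d
  end.

Definition nu (k x : nat) : R := if (x <=? k)%nat then 1 else 0.

(* One-step transition probability x -> y of
   X_{t+1} = X_t - D_{t+1} + nu_t xi_{t+1}, xi ~ Bernoulli(p) independent of D. *)
Definition trans (p q : R) (k x y : nat) : R :=
  sum_f_R0 (fun d =>
    dep_pmf q x d *
      ((if (y =? x - d)%nat then 1 - nu k x * p else 0) +
       (if (y =? x - d + 1)%nat then nu k x * p else 0))) x.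

Definition stationary (p q : R) (k : nat) (pi : nat -> R) : Prop :=
  (forall y, 0 <= pi y) /\
  infinite_sum pi 1 /\
  (forall y, infinite_sum (fun x => pi x * trans p q k x y) (pi y)).

From Stdlib Require Import Reals Lra Lia Arith.
Open Scope R_scope.

(* Let [phi] ([potential]) solve the Poisson equation [phi - P_1 phi = 1] of the chain
   that always admits arrivals, [P_v] being the one-step mean [step_mean] under [nu = v].
   It can be built upwards, since from [m] the only way to reach [m + 1] is "no departure,
   one arrival", an event of positive probability; comparing the terms of [P_1 phi] shows
   that [phi] decreases.  A stationary law [pi] of the threshold-[k] chain lives on
   [0..k+1], so [sum pi (phi - P_nu phi) = 0]; as [phi - P_nu phi] is [1] on the active
   states and [-A k] at [k + 1], with [A k = (P_0 phi - phi)(k + 1) >= 0] ([drift k]),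
   this gives [sum_{j<=k} pi j = A k / (1 + A k)].  Finally [A] is strictly increasing,
   which is where [2 p < q] enters, through [(1 - q/x)^x <= 1 - p]. *)

Lemma sum_f_R0_swap (f : nat -> nat -> R) n m :
  sum_f_R0 (fun i => sum_f_R0 (fun j => f i j) m) n =
  sum_f_R0 (fun j => sum_f_R0 (fun i => f i j) n) m.
Proof.
  induction n as [|n IH]; simpl.
  - apply sum_eq; reflexivity.
  - rewrite IH, <- sum_plus. apply sum_eq; reflexivity.
Qed.

Lemma sum_f_R0_indicator (a N : nat) (c : R) (g : nat -> R) :
  sum_f_R0 (fun y => (if (y =? a)%nat then c else 0) * g y) N =
  if (a <=? N)%nat then c * g a else 0.
Proof.
  induction N as [|N IH].
  - destruct a; simpl; ring.
  - rewrite tech5, IH. destruct (Nat.eqb_spec (S N) a) as [<-|Ha].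
    + rewrite (proj2 (Nat.leb_nle (S N) N)) by lia. rewrite Nat.leb_refl. ring.
    + destruct (Nat.leb_spec a N); destruct (Nat.leb_spec a (S N)); try lia; ring.
Qed.

Lemma sum_f_R0_add_at0 (b : nat -> R) (c : R) n :
  sum_f_R0 (fun d => b d + (if (d =? 0)%nat then c else 0)) n = sum_f_R0 b n + c.
Proof. induction n as [|n IH]; simpl; [|rewrite IH]; ring. Qed.

Lemma sum_f_R0_le_mono (f : nat -> R) m n :
  (forall i, 0 <= f i) -> (m <= n)%nat -> sum_f_R0 f m <= sum_f_R0 f n.
Proof.
  intros Hf Hmn. induction Hmn as [|n _ IH]; [lra|]. rewrite tech5. specialize (Hf (S n)). lra.
Qed.

Lemma sum_f_R0_ge_term (f : nat -> R) n i :
  (forall j, 0 <= f j) -> (i <= n)%nat -> f i <= sum_f_R0 f n.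
Proof.
  intros Hf Hi. destruct i as [|i]; [|rewrite <- (sum_f_R0_le_mono f (S i) n Hf Hi), tech5].
  - pose proof (sum_f_R0_le_mono f 0 n Hf (Nat.le_0_l n)). simpl in *. lra.
  - pose proof (cond_pos_sum f i Hf). lra.
Qed.

Lemma infinite_sum_finite_support (f : nat -> R) M l :
  (forall n, (M < n)%nat -> f n = 0) -> infinite_sum f l -> l = sum_f_R0 f M.
Proof.
  intros Hf Hl. apply (uniqueness_sum f); [assumption|].
  assert (Hconst : forall n, (M <= n)%nat -> sum_f_R0 f n = sum_f_R0 f M).
  { intros n Hn. induction Hn as [|n Hn IH]; [reflexivity|].
    rewrite tech5, IH, Hf by lia. ring. }
  intros eps Heps. exists M. intros n Hn. rewrite Hconst by lia. unfold Rdist.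
  rewrite Rminus_diag, Rabs_R0. lra.
Qed.

Lemma infinite_sum_sum_f_R0 (F : nat -> nat -> R) (L : nat -> R) N :
  (forall y, (y <= N)%nat -> infinite_sum (F y) (L y)) ->
  infinite_sum (fun x => sum_f_R0 (fun y => F y x) N) (sum_f_R0 L N).
Proof.
  induction N as [|N IH]; intros HF; [apply HF; lia|].
  change (Un_cv (fun n => sum_f_R0 (fun x => sum_f_R0 (fun y => F y x) (S N)) n)
                (sum_f_R0 L N + L (S N))).
  apply Un_cv_ext with (fun n => sum_f_R0 (fun x => sum_f_R0 (fun y => F y x) N) n
                                 + sum_f_R0 (F (S N)) n).
  - intros n. rewrite <- sum_plus. apply sum_eq. reflexivity.
  - apply CV_plus; [apply IH; intros; apply HF|apply HF]; lia.
Qed.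

Lemma C_pos n d : 0 < C n d.
Proof.
  unfold C. apply Rdiv_lt_0_compat; [|apply Rmult_lt_0_compat]; apply INR_fact_lt_0.
Qed.

Lemma C_n_0 n : C n 0 = 1.
Proof.
  unfold C. rewrite Nat.sub_0_r. simpl. field. apply INR_fact_neq_0.
Qed.

Lemma C_n_n n : C n n = 1.
Proof. rewrite pascal_step1, Nat.sub_diag by lia. apply C_n_0. Qed.

Lemma Bernoulli_one_minus (r : R) m :
  0 <= r <= 1 -> (1 - r) ^ m * (1 + INR m * r) <= 1.
Proof.
  intros Hr. induction m as [|m IH]; [simpl; lra|].
  rewrite S_INR. simpl pow. pose proof (pos_INR m).
  assert (0 <= (1 - r) ^ m) by (apply pow_le; lra).
  assert ((1 - r) * (1 + (INR m + 1) * r) <= 1 + INR m * r) by nra.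
  nra.
Qed.

Definition departure_mean (q : R) (g : nat -> R) (x : nat) : R :=
  sum_f_R0 (fun d => dep_pmf q x d * g (x - d)%nat) x.

Section Departures.
Variable q : R.
Hypotheses (q_pos : 0 < q) (q_lt_1 : q < 1).

Lemma dep_rate_bounds n : 0 < q / INR (S n) < 1.
Proof.
  assert (1 <= INR (S n)) by (rewrite S_INR; pose proof (pos_INR n); lra).
  split; [apply Rdiv_lt_0_compat; lra|].
  apply (Rmult_lt_reg_r (INR (S n))); [lra|].
  unfold Rdiv. rewrite Rmult_assoc, Rinv_l by lra. lra.
Qed.

Lemma dep_pmf_nonneg x d : 0 <= dep_pmf q x d.
Proof.
  destruct x as [|x]; unfold dep_pmf.
  - destruct d; simpl; lra.
  - unfold binom_pmf. destruct (d <=? S x)%nat; [|lra].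
    pose proof (dep_rate_bounds x). pose proof (C_pos (S x) d).
    apply Rmult_le_pos; [apply Rmult_le_pos|]; [lra|apply pow_le; lra|apply pow_le; lra].
Qed.

Lemma dep_pmf_sum x : sum_f_R0 (dep_pmf q x) x = 1.
Proof.
  destruct x as [|x]; [reflexivity|].
  set (r := q / INR (S x)).
  rewrite <- (pow1 (S x)), <- (Rplus_minus r 1), binomial.
  apply sum_eq. intros d Hd. unfold dep_pmf, binom_pmf.
  rewrite (proj2 (Nat.leb_le _ _) Hd). reflexivity.
Qed.

Lemma dep_pmf_0 x : dep_pmf q x 0 = (1 - q / INR x) ^ x.
Proof.
  destruct x as [|x]; [reflexivity|]. unfold dep_pmf, binom_pmf.
  rewrite (proj2 (Nat.leb_le 0 (S x))), C_n_0, Nat.sub_0_r by lia. ring.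
Qed.

Lemma dep_pmf_0_pos x : 0 < dep_pmf q x 0.
Proof.
  destruct x as [|x]; [simpl; lra|].
  rewrite dep_pmf_0. pose proof (dep_rate_bounds x). apply pow_lt. lra.
Qed.

Lemma dep_pmf_diag_pos x : 0 < dep_pmf q x x.
Proof.
  destruct x as [|x]; [simpl; lra|]. unfold dep_pmf, binom_pmf.
  rewrite Nat.leb_refl, C_n_n, Nat.sub_diag. pose proof (dep_rate_bounds x).
  rewrite pow_O, Rmult_1_r, Rmult_1_l. apply pow_lt. lra.
Qed.

(* [(1 - q/x)^x <= 1/(1 + q)] by Bernoulli, and [1/(1 + q) <= 1 - p] once [p (1 + q) <= q]. *)
Lemma dep_pmf_0_le p x : 0 < p -> 2 * p < q -> (1 <= x)%nat -> dep_pmf q x 0 <= 1 - p.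
Proof.
  intros Hp Hpq Hx. destruct x as [|x]; [lia|]. rewrite dep_pmf_0.
  pose proof (dep_rate_bounds x) as Hr.
  pose proof (Bernoulli_one_minus (q / INR (S x)) (S x) ltac:(lra)) as HB.
  replace (INR (S x) * (q / INR (S x))) with q in HB
    by (field; apply not_0_INR; lia).
  assert (0 <= (1 - q / INR (S x)) ^ S x) by (apply pow_le; lra).
  nra.
Qed.

Lemma departure_mean_const c x : departure_mean q (fun _ => c) x = c.
Proof. unfold departure_mean. rewrite <- scal_sum, dep_pmf_sum. ring. Qed.

Lemma departure_mean_ge g c x :
  (forall y, (y < x)%nat -> c <= g y) ->
  (1 - dep_pmf q x 0) * c + dep_pmf q x 0 * g x <= departure_mean q g x.
Proof.
  intros Hg.
  replace ((1 - dep_pmf q x 0) * c + dep_pmf q x 0 * g x) with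
    (sum_f_R0 (fun d => dep_pmf q x d * c +
                        (if (d =? 0)%nat then dep_pmf q x 0 * (g x - c) else 0)) x)
    by (rewrite sum_f_R0_add_at0, <- scal_sum, dep_pmf_sum; ring).
  apply sum_Rle. intros d Hd. destruct d as [|d]; cbn [Nat.eqb].
  - rewrite Nat.sub_0_r. right. ring.
  - rewrite Rplus_0_r. apply Rmult_le_compat_l; [apply dep_pmf_nonneg|apply Hg; lia].
Qed.

End Departures.

(* Conditional mean of [g X_{t+1}] given [X_t = x] and [nu_t = v]. *)
Definition step_mean (p q v : R) (g : nat -> R) (x : nat) : R :=
  (1 - v * p) * departure_mean q g x + v * p * departure_mean q (fun y => g (S y)) x.

Lemma step_mean_passive p q g x : step_mean p q 0 g x = departure_mean q g x.
Proof. unfold step_mean. ring. Qed.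

Lemma step_mean_ext p q v g h x :
  (forall y, g y = h y) -> step_mean p q v g x = step_mean p q v h x.
Proof.
  intros Hgh. unfold step_mean, departure_mean.
  f_equal; f_equal; apply sum_eq; intros d _; rewrite Hgh; reflexivity.
Qed.

Lemma nu_le k x : (x <= k)%nat -> nu k x = 1.
Proof. intros H. unfold nu. rewrite (proj2 (Nat.leb_le _ _) H). reflexivity. Qed.

Lemma nu_gt k x : (k < x)%nat -> nu k x = 0.
Proof. intros H. unfold nu. rewrite (proj2 (Nat.leb_nle x k)) by lia. reflexivity. Qed.

Lemma nu_0_or_1 k x : nu k x = 0 \/ nu k x = 1.
Proof. unfold nu. destruct (x <=? k)%nat; auto. Qed.

Section Chain.
Variables p q : R.
Hypotheses (p_nonneg : 0 <= p) (p_le_1 : p <= 1) (q_pos : 0 < q) (q_lt_1 : q < 1).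

Lemma step_mean_const v c x : step_mean p q v (fun _ => c) x = c.
Proof. unfold step_mean. rewrite !departure_mean_const. ring. Qed.

Lemma trans_nonneg k x y : 0 <= trans p q k x y.
Proof.
  apply cond_pos_sum. intros d. apply Rmult_le_pos; [apply dep_pmf_nonneg; lra|].
  destruct (nu_0_or_1 k x) as [-> | ->];
    destruct (y =? x - d)%nat; destruct (y =? x - d + 1)%nat; lra.
Qed.

(* Above the threshold, the chain empties in one step when every customer departs. *)
Lemma trans_to_0_pos k x : (k < x)%nat -> 0 < trans p q k x 0.
Proof.
  intros Hx. unfold trans. rewrite nu_gt by assumption.
  eapply Rlt_le_trans; [|apply (sum_f_R0_ge_term _ x x); [|lia]].
  - cbv beta. rewrite Nat.sub_diag. cbn [Nat.eqb Nat.add].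
    pose proof (dep_pmf_diag_pos q q_pos q_lt_1 x). lra.
  - intros d. apply Rmult_le_pos; [apply dep_pmf_nonneg; lra|].
    destruct (0 =? x - d)%nat; destruct (0 =? x - d + 1)%nat; lra.
Qed.

Lemma sum_trans_mul k x N g :
  (x <= N)%nat -> (nu k x = 0 \/ (S x <= N)%nat) ->
  sum_f_R0 (fun y => trans p q k x y * g y) N = step_mean p q (nu k x) g x.
Proof.
  intros HxN Hup. unfold trans.
  transitivity (sum_f_R0 (fun y => sum_f_R0 (fun d =>
      ((if (y =? x - d)%nat then 1 - nu k x * p else 0) * g y +
       (if (y =? x - d + 1)%nat then nu k x * p else 0) * g y) * dep_pmf q x d) x) N).
  { apply sum_eq; intros y _. rewrite Rmult_comm, scal_sum. apply sum_eq; intros; ring. }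
  rewrite sum_f_R0_swap. unfold step_mean, departure_mean.
  rewrite !scal_sum, <- sum_plus. apply sum_eq. intros d Hd.
  rewrite <- scal_sum, sum_plus, !sum_f_R0_indicator.
  rewrite (proj2 (Nat.leb_le (x - d) N)) by lia.
  replace (x - d + 1)%nat with (S (x - d)) by lia.
  destruct (Nat.leb_spec (S (x - d)) N); [ring|].
  destruct Hup as [-> | ]; [ring|lia].
Qed.

Lemma sum_trans_mul_recurrent k x g : (x <= S k)%nat ->
  sum_f_R0 (fun y => trans p q k x y * g y) (S k) = step_mean p q (nu k x) g x.
Proof.
  intros Hx. apply sum_trans_mul; [assumption|].
  destruct (Nat.leb_spec x k); [right; lia|left; apply nu_gt; lia].
Qed.

Lemma sum_trans_recurrent k x : (x <= S k)%nat -> sum_f_R0 (trans p q k x) (S k) = 1.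
Proof.
  intros Hx. rewrite <- (step_mean_const (nu k x) 1 x), <- sum_trans_mul_recurrent by assumption.
  apply sum_eq. intros; ring.
Qed.

Section Stationary.
Variables (k : nat) (pi : nat -> R).
Hypothesis pi_stat : stationary p q k pi.

(* [b x] is the mass that [pi x] sends into [0..k+1].  Summing the balance equations over
   [0..k+1] gives [sum b = sum_{y<=k+1} pi y], while [b = pi] on [0..k+1], which the chain
   never leaves; so [b] vanishes above [k+1], hence so does [pi], as [trans x 0 > 0]. *)
Lemma stationary_support x : (S k < x)%nat -> pi x = 0.
Proof.
  destruct pi_stat as [Hpos [_ Hbal]].
  pose (b x := sum_f_R0 (fun y => pi x * trans p q k x y) (S k)).
  assert (Hb : forall x, b x = pi x * sum_f_R0 (trans p q k x) (S k)).
  { intros z. unfold b. rewrite scal_sum. apply sum_eq. intros; ring. }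
  assert (Hsum : infinite_sum b (sum_f_R0 pi (S k)))
    by (apply infinite_sum_sum_f_R0; intros; apply Hbal).
  assert (Hb_nonneg : forall x, 0 <= b x).
  { intros z. rewrite Hb. apply Rmult_le_pos; [apply Hpos|].
    apply cond_pos_sum. intros; apply trans_nonneg. }
  assert (Hlow : sum_f_R0 b (S k) = sum_f_R0 pi (S k)).
  { apply sum_eq. intros z Hz. rewrite Hb, sum_trans_recurrent by assumption. ring. }
  intros Hx. destruct x as [|x]; [lia|].
  assert (Hbx : b (S x) <= 0).
  { pose proof (sum_incr b (S x) _ Hsum Hb_nonneg) as Hle. rewrite tech5 in Hle.
    pose proof (sum_f_R0_le_mono b (S k) x Hb_nonneg ltac:(lia)). lra. }
  assert (Htrans : 0 < sum_f_R0 (trans p q k (S x)) (S k)).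
  { apply Rlt_le_trans with (trans p q k (S x) 0).
    - apply trans_to_0_pos. lia.
    - apply sum_f_R0_ge_term; [intros; apply trans_nonneg|lia]. }
  rewrite Hb in Hbx. pose proof (Hpos (S x)). nra.
Qed.

Lemma stationary_mass : sum_f_R0 pi (S k) = 1.
Proof.
  destruct pi_stat as [_ [Htot _]]. symmetry.
  apply infinite_sum_finite_support; [apply stationary_support|assumption].
Qed.

Lemma stationary_balance y : pi y = sum_f_R0 (fun x => pi x * trans p q k x y) (S k).
Proof.
  destruct pi_stat as [_ [_ Hbal]]. apply infinite_sum_finite_support; [|apply Hbal].
  intros x Hx. rewrite stationary_support by lia. ring.
Qed.

Lemma stationary_sum_step_mean g :
  sum_f_R0 (fun x => pi x * g x) (S k) =
  sum_f_R0 (fun x => pi x * step_mean p q (nu k x) g x) (S k).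
Proof.
  transitivity (sum_f_R0 (fun y => sum_f_R0 (fun x => pi x * trans p q k x y * g y) (S k)) (S k)).
  - apply sum_eq. intros y _. rewrite stationary_balance at 1. rewrite Rmult_comm, scal_sum.
    apply sum_eq; intros; ring.
  - rewrite <- sum_f_R0_swap. apply sum_eq. intros x Hx.
    rewrite <- sum_trans_mul_recurrent, scal_sum by assumption.
    apply sum_eq; intros; ring.
Qed.
End Stationary.
End Chain.

Definition trunc (m : nat) (g : nat -> R) (i : nat) : R := if (i <=? m)%nat then g i else 0.

Section Potential.
Variables p q : R.
Hypotheses (p_pos : 0 < p) (p_le_1 : p <= 1) (q_pos : 0 < q) (q_lt_1 : q < 1).

Lemma step_mean_active_split g m :
  step_mean p q 1 g m = step_mean p q 1 (trunc m g) m + dep_pmf q m 0 * p * g (S m).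
Proof.
  unfold step_mean, departure_mean.
  assert (Hlow : sum_f_R0 (fun d => dep_pmf q m d * g (m - d)%nat) m =
                 sum_f_R0 (fun d => dep_pmf q m d * trunc m g (m - d)%nat) m).
  { apply sum_eq. intros d Hd. unfold trunc.
    rewrite (proj2 (Nat.leb_le (m - d) m)) by lia. reflexivity. }
  assert (Hup : sum_f_R0 (fun d => dep_pmf q m d * g (S (m - d))) m =
                sum_f_R0 (fun d => dep_pmf q m d * trunc m g (S (m - d))) m
                + dep_pmf q m 0 * g (S m)).
  { rewrite <- sum_f_R0_add_at0. apply sum_eq. intros d Hd. unfold trunc.
    destruct d as [|d]; cbn [Nat.eqb].
    - rewrite Nat.sub_0_r, (proj2 (Nat.leb_nle (S m) m)) by lia. ring.
    - rewrite (proj2 (Nat.leb_le (S (m - S d)) m)) by lia. ring. }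
  rewrite Hlow, Hup. ring.
Qed.

(* Solving [step_mean p q 1 phi m = phi m - 1] for [phi (S m)]; [potential_upto n] is
   correct on [0..n]. *)
Fixpoint potential_upto (n : nat) : nat -> R :=
  match n with
  | O => fun _ => 0
  | S m => let g := potential_upto m in
      fun i => if (i <=? m)%nat then g i
               else (g m - 1 - step_mean p q 1 (trunc m g) m) / (dep_pmf q m 0 * p)
  end.

Definition potential (n : nat) : R := potential_upto n n.

Lemma potential_upto_stable i m : (i <= m)%nat -> potential_upto m i = potential i.
Proof.
  induction 1 as [|m Him IH]; [reflexivity|].
  cbn [potential_upto]. rewrite (proj2 (Nat.leb_le i m) Him). exact IH.
Qed.

Lemma potential_S m :
  potential (S m) =
  (potential m - 1 - step_mean p q 1 (trunc m potential) m) / (dep_pmf q m 0 * p).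
Proof.
  unfold potential at 1. cbn [potential_upto].
  rewrite (proj2 (Nat.leb_nle (S m) m)) by lia.
  do 2 f_equal. apply step_mean_ext. intros i. unfold trunc.
  destruct (Nat.leb_spec i m); [apply potential_upto_stable; assumption|reflexivity].
Qed.

Lemma potential_poisson x : step_mean p q 1 potential x = potential x - 1.
Proof.
  pose proof (dep_pmf_0_pos q q_pos q_lt_1 x).
  rewrite step_mean_active_split, potential_S. field. lra.
Qed.

Lemma potential_drop n :
  (forall i j, (i <= j <= n)%nat -> potential j <= potential i) ->
  1 <= dep_pmf q n 0 * p * (potential n - potential (S n)).
Proof.
  intros Hmono. pose proof (potential_poisson n) as Hpoisson. unfold step_mean in Hpoisson.
  pose proof (departure_mean_ge q q_pos q_lt_1 potential (potential n) n
                (fun y Hy => Hmono y n ltac:(lia))) as Hstay.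
  pose proof (departure_mean_ge q q_pos q_lt_1 (fun y => potential (S y)) (potential n) n
                (fun y Hy => Hmono (S y) n ltac:(lia))) as Hup.
  assert (0 <= (1 - p) * (departure_mean q potential n - potential n))
    by (apply Rmult_le_pos; lra).
  assert (0 <= p * (departure_mean q (fun y => potential (S y)) n
                    - ((1 - dep_pmf q n 0) * potential n + dep_pmf q n 0 * potential (S n))))
    by (apply Rmult_le_pos; lra).
  lra.
Qed.

Lemma potential_antitone n : forall i j, (i <= j <= n)%nat -> potential j <= potential i.
Proof.
  induction n as [|n IH]; intros i j Hij.
  - replace i with 0%nat by lia. replace j with 0%nat by lia. lra.
  - destruct (Nat.leb_spec j n); [apply IH; lia|]. replace j with (S n) by lia.
    assert (Hstep : potential (S n) < potential n).
    { pose proof (potential_drop n IH).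
      assert (0 < dep_pmf q n 0 * p)
        by (apply Rmult_lt_0_compat; [apply dep_pmf_0_pos|]; lra).
      nra. }
    destruct (Nat.leb_spec i n).
    + pose proof (IH i n ltac:(lia)). lra.
    + replace i with (S n) by lia. lra.
Qed.

Definition drift (K : nat) : R := departure_mean q potential (S K) - potential (S K).

Lemma potential_ge_below K y : (y <= S K)%nat -> potential (S K) <= potential y.
Proof. intros Hy. apply (potential_antitone (S K)). lia. Qed.

Lemma drift_nonneg K : 0 <= drift K.
Proof.
  pose proof (departure_mean_ge q q_pos q_lt_1 potential (potential (S K)) (S K)
                (fun y Hy => potential_ge_below K y ltac:(lia))).
  unfold drift. lra.
Qed.

Lemma drift_active_bound K :
  1 + (1 - p) * drift K <= dep_pmf q (S K) 0 * p * (potential (S K) - potential (S (S K))).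
Proof.
  pose proof (potential_poisson (S K)) as Hpoisson. unfold step_mean in Hpoisson.
  pose proof (departure_mean_ge q q_pos q_lt_1 (fun y => potential (S y)) (potential (S K)) (S K)
                (fun y Hy => potential_ge_below K (S y) ltac:(lia))) as Hup.
  assert (0 <= p * (departure_mean q (fun y => potential (S y)) (S K) -
                    ((1 - dep_pmf q (S K) 0) * potential (S K)
                     + dep_pmf q (S K) 0 * potential (S (S K)))))
    by (apply Rmult_le_pos; lra).
  unfold drift. lra.
Qed.

Lemma drift_passive_bound K :
  (1 - dep_pmf q (S (S K)) 0) * (potential (S K) - potential (S (S K))) <= drift (S K).
Proof.
  pose proof (departure_mean_ge q q_pos q_lt_1 potential (potential (S K)) (S (S K))
                (fun y Hy => potential_ge_below K y ltac:(lia))).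
  unfold drift. lra.
Qed.

(* With [gap = potential (S K) - potential (S (S K))] and both [dep_pmf q _ 0 <= 1 - p]:
   the active bound gives [drift K < p * gap], the passive one [p * gap <= drift (S K)]. *)
Lemma drift_lt_succ K : 2 * p < q -> drift K < drift (S K).
Proof.
  intros Hpq.
  pose proof (drift_active_bound K) as Hact. pose proof (drift_passive_bound K) as Hpas.
  pose proof (drift_nonneg K).
  pose proof (dep_pmf_0_le q q_pos q_lt_1 p (S K) p_pos Hpq ltac:(lia)) as Hf.
  pose proof (dep_pmf_0_le q q_pos q_lt_1 p (S (S K)) p_pos Hpq ltac:(lia)) as Hf'.
  pose proof (potential_antitone (S (S K)) (S K) (S (S K)) ltac:(lia)).
  set (gap := potential (S K) - potential (S (S K))) in *.
  assert (Hgap : 0 <= gap) by (unfold gap; lra).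
  assert (Hlt : 1 <= (1 - p) * (p * gap - drift K)).
  { assert (0 <= (1 - p - dep_pmf q (S K) 0) * (p * gap))
      by (apply Rmult_le_pos; [lra|apply Rmult_le_pos; lra]).
    lra. }
  assert (drift K < p * gap) by nra.
  assert (0 <= (1 - dep_pmf q (S (S K)) 0 - p) * gap) by (apply Rmult_le_pos; lra).
  lra.
Qed.

Lemma drift_increasing k k' : 2 * p < q -> (k < k')%nat -> drift k < drift k'.
Proof.
  intros Hpq Hkk. induction Hkk as [|k' _ IH]; [apply drift_lt_succ; assumption|].
  pose proof (drift_lt_succ k' Hpq). lra.
Qed.

Lemma stationary_mass_below k pi : stationary p q k pi ->
  sum_f_R0 pi k = drift k / (1 + drift k).
Proof.
  intros Hstat.
  pose proof (stationary_sum_step_mean p q (Rlt_le _ _ p_pos) p_le_1 q_pos q_lt_1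
                k pi Hstat potential) as Hinv.
  pose proof (stationary_mass p q (Rlt_le _ _ p_pos) p_le_1 q_pos q_lt_1 k pi Hstat) as Hmass.
  rewrite !tech5, nu_gt in Hinv by lia. rewrite tech5 in Hmass.
  rewrite (sum_eq (fun x => pi x * step_mean p q (nu k x) potential x)
                  (fun x => pi x * potential x - pi x) k) in Hinv
    by (intros x Hx; rewrite nu_le, potential_poisson by assumption; ring).
  rewrite (minus_sum (fun x => pi x * potential x)) in Hinv.
  pose proof (drift_nonneg k).
  assert (Hkac : sum_f_R0 pi k = (1 - sum_f_R0 pi k) * drift k).
  { rewrite step_mean_passive in Hinv. replace (1 - sum_f_R0 pi k) with (pi (S k)) by lra.
    unfold drift. lra. }
  field_simplify_eq; lra.
Qed.

End Potential.

Lemma frac_one_plus_lt a b : 0 <= a -> a < b -> a / (1 + a) < b / (1 + b).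
Proof.
  intros Ha Hab. apply (Rmult_lt_reg_r ((1 + a) * (1 + b))); [nra|].
  field_simplify; lra.
Qed.

Theorem lemma8 (p q : R) (hp : 0 < p) (h2p : 2 * p < q) (hq : q < 1)
  (k k' : nat) (pik pik' : nat -> R) (hkk : (k < k')%nat)
  (hk : stationary p q k pik) (hk' : stationary p q k' pik') :
  sum_f_R0 pik k < sum_f_R0 pik' k'.
Proof.
  assert (hp1 : p <= 1) by lra. assert (hq0 : 0 < q) by lra.
  rewrite (stationary_mass_below p q hp hp1 hq0 hq k pik hk),
          (stationary_mass_below p q hp hp1 hq0 hq k' pik' hk').
  apply frac_one_plus_lt.
  - apply drift_nonneg; assumption.
  - apply drift_increasing; assumption.
Qed.
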